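(* Let $G$ be a multigraph without self-loops whose vertex set is partitioned into three disjoint sets $\{s,t\}$, $\mathcal A$, $\mathcal B$ (with $s\ne t$) such that: the subgraph induced by $\mathcal A\cup\mathcal B$ is connected; each of $s,t$ has at least one incident edge connecting to $\mathcal A$, and each vertex of $\mathcal A$ has at least one incident edge connecting to $\{s,t\}$; and each vertex of $\mathcal B$ has at least 2 distinct neighbors in $\mathcal A$. Then $G$ admits an $(s,t)$-bipolar orientation.
   Context: $G$ admits an $(s,t)$-bipolar orientation if its edges can be directed so that there are no directed cycles, $s$ is the unique source (vertex with no incoming edges), and $t$ is the unique sink (vertex with no outgoing edges). *)

From mathcomp Require Import all_boot.
Set Implicit Arguments. Unset Strict Implicit. Unset Printing Implicit Defensive.

(* A finite multigraph: vertex type V, edge type E, each edge e has two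
   endpoints end1 e, end2 e (parallel edges allowed, since E is arbitrary). *)
Section Multigraph.
Variables (V E : finType) (end1 end2 : E -> V).

Definition loopless : Prop := forall e : E, end1 e != end2 e.

Definition joins (e : E) (x y : V) : bool :=
  ((end1 e == x) && (end2 e == y)) || ((end1 e == y) && (end2 e == x)).

Definition adjacent (x y : V) : bool := [exists e, joins e x y].

Definition induced_adj (S : {set V}) : rel V :=
  fun x y => [&& x \in S, y \in S & adjacent x y].

Definition induced_connected (S : {set V}) : Prop :=
  forall x y, x \in S -> y \in S -> connect (induced_adj S) x y.

Definition tail (o : E -> bool) (e : E) : V := if o e then end1 e else end2 e.
Definition head (o : E -> bool) (e : E) : V := if o e then end2 e else end1 e.

Definition arc (o : E -> bool) : rel V :=
  fun x y => [exists e, (tail o e == x) && (head o e == y)].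

Definition acyclic_orient (o : E -> bool) : Prop :=
  forall x y, arc o x y -> ~~ connect (arc o) y x.

Definition is_source (o : E -> bool) (v : V) : Prop := forall e, head o e != v.
Definition is_sink (o : E -> bool) (v : V) : Prop := forall e, tail o e != v.

Definition bipolar_orientation (s t : V) (o : E -> bool) : Prop :=
  [/\ acyclic_orient o,
      is_source o s, (forall v, is_source o v -> v = s),
      is_sink o t & (forall v, is_sink o v -> v = t)].

End Multigraph.

(* The orientation comes from an st-numbering: an injective r with r s
   minimal, r t maximal, and every other vertex adjacent to a vertex of
   smaller and one of larger number; directing each edge towards the larger
   number is then bipolar.  The numbering is built ear by ear from {s, t}:
   an ear is a path between two distinct numbered vertices u, w with
   r u < r w whose interior is new, and numbering the interior consecutively
   just above r u (shifting the numbers above r u out of the way) preserves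
   the invariant.  An ear always exists while some vertex is unnumbered: the
   first one is s - a ... a' - t through the connected set A ∪ B, and later
   ones leave the numbered part along an edge of A ∪ B to a new vertex v and
   come back in at most two more steps, because a vertex of A sees s or t and
   a vertex of B has a second neighbour in A. *)

From Pilot Require Import Defs.
From mathcomp Require Import all_boot zify.

Set Implicit Arguments.
Unset Strict Implicit.
Unset Printing Implicit Defensive.

Definition lift_above (m k n : nat) : nat := if m < n then n + k else n.

Lemma ltn_lift_above m k : {mono lift_above m k : a b / a < b}.
Proof.
move=> a b; rewrite /lift_above.
by case: (ltnP m a) => ?; case: (ltnP m b) => ?; rewrite ?ltn_add2r //; apply/idP/idP; lia.
Qed.

Lemma leq_lift_above m k : {mono lift_above m k : a b / a <= b}.
Proof. by move=> a b; rewrite leqNgt ltn_lift_above -leqNgt. Qed.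

Lemma lift_above_gap m k n : ~~ (m < lift_above m k n <= m + k).
Proof. by rewrite /lift_above; case: (ltnP m n) => ?; lia. Qed.

Section STNumbering.
Variables (V : finType) (adj : rel V) (s t : V).

Definition st_numbering (P : {set V}) (r : V -> nat) : Prop :=
  [/\ s \in P, t \in P, {in P &, injective r},
      {in P, forall v, r s <= r v <= r t} &
      {in P, forall v, v != s -> v != t ->
         (exists2 x, x \in P & adj x v && (r x < r v)) /\
         (exists2 y, y \in P & adj v y && (r v < r y))}].

Lemma st_numbering_pair : s != t -> st_numbering [set s; t] (fun v => nat_of_bool (v != s)).
Proof.
move=> st; split; rewrite ?inE ?eqxx ?orbT //.
- by move=> x y; rewrite !inE => /orP[]/eqP-> /orP[]/eqP->; rewrite // eqxx (eq_sym t) st.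
- by move=> v _; rewrite (eq_sym t) st; case: (v != s).
- by move=> v; rewrite !inE => /orP[]->.
Qed.

Section Ear.
Variables (P : {set V}) (r : V -> nat) (u w : V) (q : seq V).
Hypotheses (numP : st_numbering P r) (uP : u \in P) (wP : w \in P) (ruw : r u < r w).
Hypotheses (q_uniq : uniq q) (q_new : {in q, forall x, x \notin P}).
Hypothesis ear_path : path adj u (rcons q w).

(* The ear is numbered [r u + 1, ..., r u + size q], and the old vertices
   above [r u] are shifted up by [size q] to make room. *)
Definition ear_rank (v : V) : nat :=
  if v \in q then r u + (index v q).+1 else lift_above (r u) (size q) (r v).

Lemma notin_ear x : x \in P -> x \notin q.
Proof. by apply: contraL; apply: q_new. Qed.

Lemma ear_rank_old x : x \in P -> ear_rank x = lift_above (r u) (size q) (r x).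
Proof. by move=> xP; rewrite /ear_rank (negbTE (notin_ear xP)). Qed.

Lemma ear_rank_new x : x \in q -> ear_rank x = r u + (index x q).+1.
Proof. by move=> xq; rewrite /ear_rank xq. Qed.

Lemma ear_rank_new_range x : x \in q -> r u < ear_rank x <= r u + size q.
Proof.
move=> xq; rewrite ear_rank_new // addnS ltnS leq_addr /= ltn_add2l.
by rewrite index_mem.
Qed.

Lemma ear_rank_old_range x : x \in P -> ~~ (r u < ear_rank x <= r u + size q).
Proof. by move=> xP; rewrite ear_rank_old // lift_above_gap. Qed.

Lemma ltn_ear_rank : {in P &, forall x y, (ear_rank x < ear_rank y) = (r x < r y)}.
Proof. by move=> x y xP yP; rewrite !ear_rank_old // ltn_lift_above. Qed.

Lemma leq_ear_rank : {in P &, forall x y, (ear_rank x <= ear_rank y) = (r x <= r y)}.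
Proof. by move=> x y xP yP; rewrite !ear_rank_old // leq_lift_above. Qed.

Lemma ear_rank_u : ear_rank u = r u.
Proof. by rewrite ear_rank_old // /lift_above ltnn. Qed.

Lemma ear_rank_w : ear_rank w = r w + size q.
Proof. by rewrite ear_rank_old // /lift_above ruw. Qed.

Lemma ear_rank_inj : {in P :|: [set:: q] &, injective ear_rank}.
Proof.
have [_ _ r_inj _ _] := numP.
move=> x y; rewrite !inE => /orP[xP|xq] /orP[yP|yq] exy.
- apply: r_inj => //; apply/eqP.
  by rewrite eqn_leq -(leq_ear_rank xP yP) -(leq_ear_rank yP xP) exy leqnn.
- by move: (ear_rank_old_range xP); rewrite exy ear_rank_new_range.
- by move: (ear_rank_old_range yP); rewrite -exy ear_rank_new_range.
- move: exy; rewrite !ear_rank_new // => /addnI [] exy.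
  by rewrite -(nth_index u xq) exy nth_index.
Qed.

Lemma ear_rank_bounds :
  {in P :|: [set:: q], forall v, ear_rank s <= ear_rank v <= ear_rank t}.
Proof.
have [sP tP _ r_bnd _] := numP.
move=> v; rewrite !inE => /orP[vP|vq]; first by rewrite !leq_ear_rank //; apply: r_bnd.
have su : ear_rank s <= r u by rewrite -ear_rank_u leq_ear_rank //; case/andP: (r_bnd u uP).
have wt : ear_rank w <= ear_rank t by rewrite leq_ear_rank //; case/andP: (r_bnd w wP).
have /andP[uv vu] := ear_rank_new_range vq.
rewrite (leq_trans su (ltnW uv)) /= (leq_trans vu) // (leq_trans _ wt) //.
by rewrite ear_rank_w leq_add2r ltnW.
Qed.

Lemma ear_rank_before i : i <= size q ->
  nth u (u :: rcons q w) i \in P :|: [set:: q] /\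
  ear_rank (nth u (u :: rcons q w) i) = r u + i.
Proof.
case: i => [|i] /= iq; first by rewrite inE uP ear_rank_u addn0.
by rewrite nth_rcons iq !inE mem_nth ?orbT // ear_rank_new ?mem_nth // index_uniq.
Qed.

Lemma ear_rank_after i : i < size q ->
  nth u (rcons q w) i.+1 \in P :|: [set:: q] /\
  r u + i.+1 < ear_rank (nth u (rcons q w) i.+1).
Proof.
move=> iq; rewrite nth_rcons; case: ltnP => [iq'|qi].
  by rewrite !inE mem_nth ?orbT // ear_rank_new ?mem_nth // index_uniq // ltn_add2l.
have -> : i.+1 = size q by apply/eqP; rewrite eqn_leq iq.
by rewrite eqxx inE wP ear_rank_w -addSn ltn_add2r.
Qed.

Lemma ear_rank_new_neighbours v : v \in q ->
  (exists2 x, x \in P :|: [set:: q] & adj x v && (ear_rank x < ear_rank v)) /\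
  (exists2 y, y \in P :|: [set:: q] & adj v y && (ear_rank v < ear_rank y)).
Proof.
move=> vq; have iq : index v q < size q by rewrite index_mem.
have nth_v : nth u (rcons q w) (index v q) = v by rewrite nth_rcons iq nth_index.
move/(pathP u): ear_path; rewrite size_rcons => step.
have [xP' x_rank] := ear_rank_before (ltnW iq).
have [yP' y_rank] := ear_rank_after iq.
rewrite ear_rank_new //; split.
- exists (nth u (u :: rcons q w) (index v q)) => //.
  by rewrite x_rank ltn_add2l ltnSn andbT -{2}nth_v step // leqW.
- exists (nth u (rcons q w) (index v q).+1) => //.
  by rewrite y_rank andbT -{1}nth_v; apply: (step (index v q).+1).
Qed.

Lemma st_numbering_ear_rank : st_numbering (P :|: [set:: q]) ear_rank.
Proof.
have [sP tP _ _ r_nbrs] := numP.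
split; [by rewrite in_setU sP | by rewrite in_setU tP | exact: ear_rank_inj |
        exact: ear_rank_bounds | move=> v].
rewrite !inE => /orP[vP|vq] vs vt; last exact: ear_rank_new_neighbours.
have [[x xP /andP[xv rxv]] [y yP /andP[vy rvy]]] := r_nbrs v vP vs vt.
split; [exists x | exists y]; rewrite ?in_setU ?xP ?yP //=.
  by rewrite xv (ltn_ear_rank xP vP).
by rewrite vy (ltn_ear_rank vP yP).
Qed.

End Ear.

Definition is_ear (P : {set V}) (u : V) (q : seq V) (w : V) : Prop :=
  [/\ u \in P, w \in P, uniq q,
      {in q, forall x, x \notin P} & path adj u (rcons q w)].

Lemma proper_ear P u q w : is_ear P u q w -> q != [::] -> P \proper P :|: [set:: q].
Proof.
case: q => // x q [_ _ _ q_new _] _; apply: properUl; apply/subsetPn.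
by exists x; rewrite ?inE ?eqxx // q_new ?mem_head.
Qed.

Hypothesis adjC : symmetric adj.

Lemma st_numbering_ear P r u q w : st_numbering P r -> u != w -> is_ear P u q w ->
  exists r', st_numbering (P :|: [set:: q]) r'.
Proof.
move=> numP uw [uP wP q_uniq q_new ear_path]; have [_ _ r_inj _ _] := numP.
case: (ltngtP (r u) (r w)) => [ruw | rwu | /(r_inj _ _ uP wP) eq_uw].
- by exists (ear_rank r u q); apply: (st_numbering_ear_rank numP uP wP).
- have -> : [set:: q] = [set:: rev q] by apply/setP => x; rewrite !inE mem_rev.
  exists (ear_rank r w (rev q)).
  apply: (st_numbering_ear_rank numP wP uP rwu); rewrite ?rev_uniq //.
    by move=> x; rewrite mem_rev; apply: q_new.
  rewrite -rev_cons -(belast_rcons u q w) -{1}(last_rcons u q w) rev_path.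
  by rewrite (@eq_path _ _ adj) // => x y; apply: adjC.
- by rewrite eq_uw eqxx in uw.
Qed.

Lemma st_numbering_grow P r u q w :
  st_numbering P r -> u != w -> is_ear P u q w -> q != [::] ->
  exists2 P', (exists r', st_numbering P' r') & P \proper P'.
Proof.
move=> numP uw ear q0; exists (P :|: [set:: q]); last exact: proper_ear ear q0.
exact: st_numbering_ear numP uw ear.
Qed.

Lemma st_numbering_setT_lower r :
  st_numbering setT r -> (exists2 x, x != t & adj x t) ->
  forall v, v != s -> exists2 x, adj x v & r x < r v.
Proof.
move=> [_ _ r_inj r_bnd r_nbrs] [a a_neq_t a_t] v vs.
have [-> | vt] := eqVneq v t.
  exists a => //; rewrite ltn_neqAle; case/andP: (r_bnd a (in_setT a)) => _ ->.
  by rewrite andbT; apply: contra a_neq_t => /eqP/r_inj-> //; rewrite inE.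
by have [[x _ /andP[]]] := r_nbrs v (in_setT v) vs vt; exists x.
Qed.

Lemma st_numbering_setT_upper r :
  st_numbering setT r -> (exists2 y, y != s & adj s y) ->
  forall v, v != t -> exists2 y, adj v y & r v < r y.
Proof.
move=> [_ _ r_inj r_bnd r_nbrs] [a a_neq_s s_a] v vt.
have [-> | vs] := eqVneq v s.
  exists a => //; rewrite ltn_neqAle; case/andP: (r_bnd a (in_setT a)) => -> _.
  by rewrite andbT; apply: contra a_neq_s => /eqP/r_inj-> //; rewrite inE.
by have [_ [y _ /andP[]]] := r_nbrs v (in_setT v) vs vt; exists y.
Qed.

End STNumbering.

Lemma growth_to_setT (T : finType) (Pr : {set T} -> Prop) :
  (forall A, Pr A -> A != setT -> exists2 B, Pr B & A \proper B) ->
  forall A, Pr A -> Pr setT.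
Proof.
move=> grow A; have [n] := ubnP #|~: A|; elim: n A => // n IH A ltA PA.
have [<- // | AT] := eqVneq A setT.
have [B PB AB] := grow A PA AT; apply: IH PB.
by rewrite -ltnS (leq_trans _ ltA) // ltnS proper_card // properC.
Qed.

Lemma connect_exit (T : finType) (e : rel T) (A : {pred T}) x y :
  connect e x y -> x \in A -> y \notin A ->
  exists x' y', [/\ e x' y', x' \in A & y' \notin A].
Proof.
move=> /connectP[p ep ->] {y}; elim: p x ep => [|z p IH] x /=; first by move=> _ ->.
move=> /andP[xz zp] xA; have [zA | zA] := boolP (z \in A); first exact: IH zA.
by exists x, z.
Qed.

Lemma connect_leq (T : finType) (e : rel T) (f : T -> nat) :
  (forall x y, e x y -> f x <= f y) -> forall x y, connect e x y -> f x <= f y.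
Proof.
move=> fe x y /connectP[p ep ->] {y}; elim: p x ep => //= z p IH x /andP[xz zp].
exact: leq_trans (fe _ _ xz) (IH _ zp).
Qed.

Section Multigraph.
Variables (V E : finType) (end1 end2 : E -> V).
Local Notation adj := (adjacent end1 end2).

Lemma joins_adjacent e x y : joins end1 end2 e x y -> adj x y.
Proof. by move=> exy; apply/existsP; exists e. Qed.

Lemma adjacentC : symmetric adj.
Proof. by move=> x y; apply: eq_existsb => e; rewrite /joins orbC. Qed.

Lemma induced_adj_sub S : subrel (induced_adj end1 end2 S) adj.
Proof. by move=> x y /and3P[]. Qed.

Lemma induced_path_sub S x p : path (induced_adj end1 end2 S) x p -> {subset p <= S}.
Proof.
elim: p x => //= y p IH x /andP[/and3P[_ yS _] yp] z.
by rewrite inE => /predU1P[-> // | /(IH _ yp)].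
Qed.

End Multigraph.

Section RankOrientation.
Variables (V E : finType) (end1 end2 : E -> V) (r : V -> nat).
Local Notation adj := (adjacent end1 end2).

Definition rank_orientation (e : E) : bool := r (end1 e) < r (end2 e).
Local Notation tail := (Defs.tail end1 end2 rank_orientation).
Local Notation head := (Defs.head end1 end2 rank_orientation).

Lemma rank_orientation_joins e x y :
  joins end1 end2 e x y -> r x < r y -> tail e = x /\ head e = y.
Proof.
rewrite /joins /Defs.tail /Defs.head /rank_orientation.
by case/orP=> /andP[/eqP-> /eqP->] xy; rewrite ?xy // ltnNge ltnW.
Qed.

Hypotheses (E_loopless : loopless end1 end2) (r_inj : injective r).

Lemma ltn_rank_tail_head e : r (tail e) < r (head e).
Proof.
rewrite /Defs.tail /Defs.head /rank_orientation.
case: (ltngtP (r (end1 e)) (r (end2 e))) => // /r_inj e12.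
by have := E_loopless e; rewrite e12 eqxx.
Qed.

Lemma rank_orientation_arc x y : Defs.arc end1 end2 rank_orientation x y -> r x < r y.
Proof. by case/existsP=> e /andP[/eqP<- /eqP<-]; apply: ltn_rank_tail_head. Qed.

Lemma rank_orientation_acyclic : acyclic_orient end1 end2 rank_orientation.
Proof.
have arc_leq a b : Defs.arc end1 end2 rank_orientation a b -> r a <= r b.
  by move/rank_orientation_arc/ltnW.
move=> x y /rank_orientation_arc xy; apply/negP => /(connect_leq arc_leq).
by rewrite leqNgt xy.
Qed.

Variables s t : V.
Hypothesis r_bounds : forall v, r s <= r v <= r t.
Hypothesis lower_neighbour : forall v, v != s -> exists2 x, adj x v & r x < r v.
Hypothesis upper_neighbour : forall v, v != t -> exists2 y, adj v y & r v < r y.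

Lemma bipolar_rank_orientation : bipolar_orientation end1 end2 s t rank_orientation.
Proof.
split; first exact: rank_orientation_acyclic.
- move=> e; apply: contraTneq (ltn_rank_tail_head e) => ->.
  by rewrite -leqNgt; case/andP: (r_bounds (tail e)).
- move=> v src; apply/eqP; apply: contraPT src => vs src.
  have [x /existsP[e exv] xv] := lower_neighbour vs.
  by have := src e; rewrite (rank_orientation_joins exv xv).2 eqxx.
- move=> e; apply: contraTneq (ltn_rank_tail_head e) => ->.
  by rewrite -leqNgt; case/andP: (r_bounds (head e)).
- move=> v snk; apply/eqP; apply: contraPT snk => vt snk.
  have [y /existsP[e evy] vy] := upper_neighbour vt.
  by have := snk e; rewrite (rank_orientation_joins evy vy).1 eqxx.
Qed.

End RankOrientation.

Section Lemma5p5.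
Variables (V E : finType) (end1 end2 : E -> V) (s t : V) (A B : {set V}).
Local Notation adj := (adjacent end1 end2).
Local Notation joins := (joins end1 end2).
Hypotheses (s_neq_t : s != t) (sA : s \notin A) (sB : s \notin B).
Hypotheses (tA : t \notin A) (tB : t \notin B) (AB_disjoint : [disjoint A & B]).
Hypothesis cover : forall v, [|| v == s, v == t, v \in A | v \in B].
Hypothesis AB_connected : induced_connected end1 end2 (A :|: B).
Hypothesis s_to_A : exists e a, a \in A /\ joins e s a.
Hypothesis t_to_A : exists e a, a \in A /\ joins e t a.
Hypothesis A_to_st : forall a, a \in A -> exists e, joins e a s || joins e a t.
Hypothesis B_to_A : forall b, b \in B -> exists a1 a2,
  [/\ a1 \in A, a2 \in A, a1 != a2, adj b a1 & adj b a2].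

Lemma AB_neq_st x y : x \in A :|: B -> y \in [set s; t] -> x != y.
Proof.
move=> xAB; rewrite !inE => /orP[]/eqP->; apply: contraTneq xAB => ->;
  by rewrite inE ?(negbTE sA) ?(negbTE sB) ?(negbTE tA) ?(negbTE tB).
Qed.

Lemma AB_of_notin_st v : v \notin [set s; t] -> v \in A :|: B.
Proof.
rewrite !inE negb_or => /andP[/negbTE vs /negbTE vt].
by have := cover v; rewrite vs vt.
Qed.

Lemma A_adj_st a : a \in A -> exists2 x, x \in [set s; t] & adj a x.
Proof.
move=> aA; have [e /orP[] /joins_adjacent ax] := A_to_st aA;
  by [exists s; rewrite ?inE ?eqxx | exists t; rewrite ?inE ?eqxx ?orbT].
Qed.

Lemma B_adj_A_other b u : b \in B -> exists a, [/\ a \in A, adj b a & a != u].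
Proof.
move=> bB; have [a1 [a2 [a1A a2A a12 ba1 ba2]]] := B_to_A bB.
by have [a1u | a1u] := eqVneq a1 u; [exists a2; rewrite -a1u eq_sym | exists a1].
Qed.

Lemma first_ear (P : {set V}) : s \in P -> t \in P -> {in A :|: B, forall x, x \notin P} ->
  exists u q w, [/\ u != w, q != [::] & is_ear adj P u q w].
Proof.
move=> sP tP AB_new; have [es [a_s [a_sA s_a_s]]] := s_to_A.
have [et [a_t [a_tA t_a_t]]] := t_to_A.
have /connectP[p p_path a_t_last] : connect (induced_adj end1 end2 (A :|: B)) a_s a_t.
  by apply: AB_connected; rewrite inE ?a_sA ?a_tA.
move: t_a_t; rewrite a_t_last; case: (shortenP p_path) => p' p'_path p'_uniq p'_sub t_last.
exists s, (a_s :: p'), t; split => //; split => //.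
- move=> x; rewrite inE => /predU1P[-> | /p'_sub /(induced_path_sub p_path) xAB].
    by rewrite AB_new // inE a_sA.
  exact: AB_new.
- rewrite rcons_cons /= rcons_path (joins_adjacent s_a_s) adjacentC.
  by rewrite (joins_adjacent t_last) andbT (sub_path (@induced_adj_sub _ _ _ _ _) p'_path).
Qed.

Lemma crossing_ear (P : {set V}) h :
  s \in P -> t \in P -> h \in P -> h \in A :|: B -> P != setT ->
  exists u q w, [/\ u != w, q != [::] & is_ear adj P u q w].
Proof.
move=> sP tP hP hAB PT.
have stP x : x \in [set s; t] -> x \in P by rewrite !inE => /orP[]/eqP->.
have /subsetPn[v _ vP] : ~~ (setT \subset P) by rewrite subTset.
have vAB : v \in A :|: B by apply: AB_of_notin_st; apply: contra vP; apply: stP.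
have [u [v' [/and3P[uAB v'AB uv'] uP v'P]]] := connect_exit (AB_connected hAB vAB) hP vP.
have v'_new : {in [:: v'], forall x, x \notin P} by move=> x; rewrite inE => /eqP->.
case/setUP: v'AB => [v'A | v'B].
  have [x xst v'x] := A_adj_st v'A.
  exists u, [:: v'], x; split; rewrite ?AB_neq_st //.
  by split; [| exact: stP | | | rewrite /= uv' v'x].
have [a [aA v'a au]] := B_adj_A_other u v'B.
have [aP | aP] := boolP (a \in P).
  exists u, [:: v'], a; split; rewrite 1?eq_sym //.
  by split; rewrite //= uv' v'a.
have [x xst ax] := A_adj_st aA.
have v'_neq_a : v' != a by apply: contraTneq aA => <-; rewrite (disjointFl AB_disjoint v'B).
exists u, [:: v'; a], x; split; rewrite ?AB_neq_st //.
split; [| exact: stP | by rewrite /= inE v'_neq_a | | by rewrite /= uv' v'a ax] => //.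
by move=> y; rewrite !inE => /orP[]/eqP->.
Qed.

Lemma exists_ear (P : {set V}) : s \in P -> t \in P -> P != setT ->
  exists u q w, [/\ u != w, q != [::] & is_ear adj P u q w].
Proof.
move=> sP tP PT.
case: (pickP [pred h | (h \in P) && (h \in A :|: B)]) => [h /andP[hP hAB] | noAB].
  exact: crossing_ear hP hAB PT.
apply: first_ear => // x xAB; apply/negP => xP.
by have := noAB x; rewrite /= xP xAB.
Qed.

Lemma exists_st_numbering : exists r, st_numbering adj s t setT r.
Proof.
apply: (growth_to_setT (Pr := fun P => exists r, st_numbering adj s t P r)); last first.
  by exists (fun v => nat_of_bool (v != s)); apply: st_numbering_pair.
move=> P [r numP] PT; have [sP tP _ _ _] := numP.
have [u [q [w [uw q0 ear]]]] := exists_ear sP tP PT.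
by have := st_numbering_grow (adjacentC end1 end2) numP uw ear q0.
Qed.

End Lemma5p5.

Theorem lemma5p5 (V E : finType) (end1 end2 : E -> V)
  (s t : V) (A B : {set V}) :
  loopless end1 end2 ->
  s != t ->
  (* {s,t}, A, B partition the vertex set *)
  s \notin A -> s \notin B -> t \notin A -> t \notin B ->
  [disjoint A & B] ->
  (forall v : V, [|| v == s, v == t, v \in A | v \in B]) ->
  (* the subgraph induced by A ∪ B is connected *)
  induced_connected end1 end2 (A :|: B) ->
  (* s and t each have an edge to A *)
  (exists e a, a \in A /\ joins end1 end2 e s a) ->
  (exists e a, a \in A /\ joins end1 end2 e t a) ->
  (* every vertex of A has an edge to s or t *)
  (forall a, a \in A -> exists e, joins end1 end2 e a s || joins end1 end2 e a t) ->
  (* every vertex of B has at least two distinct neighbours in A *)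
  (forall b, b \in B -> exists a1 a2, [/\ a1 \in A, a2 \in A, a1 != a2,
        adjacent end1 end2 b a1 & adjacent end1 end2 b a2]) ->
  exists o : E -> bool, bipolar_orientation end1 end2 s t o.
Proof.
move=> loopless_E st sA sB tA tB AB cover AB_conn s_to_A t_to_A A_to_st B_to_A.
have [r numT] := exists_st_numbering st sA sB tA tB AB cover AB_conn
  s_to_A t_to_A A_to_st B_to_A.
have [_ _ r_inj r_bounds _] := numT.
exists (rank_orientation end1 end2 r); apply: bipolar_rank_orientation => //.
- by move=> x y; apply: r_inj; rewrite inE.
- by move=> v; apply: r_bounds; rewrite inE.
- apply: (st_numbering_setT_lower numT).
  have [e [a [aA ta]]] := t_to_A; exists a; last by rewrite adjacentC (joins_adjacent ta).
  by apply: contraNneq tA => <-.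
- apply: (st_numbering_setT_upper numT).
  have [e [a [aA sa]]] := s_to_A; exists a; last exact: joins_adjacent sa.
  by apply: contraNneq sA => <-.
Qed.
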